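(* Let $\Theta$ be a hypergraph and $p:V(\Theta)\to\mathbb{R}^d$. The framework $(p,\Theta)$ is universally globally Euclideanly rigid if and only if it is universally locally Euclideanly rigid.
   Context: A hypergraph $\Theta$ has a finite vertex set $V$ and hyperedges that are subsets of $V$. In $\mathbb{R}^k$, frameworks $(p,\Theta),(q,\Theta)$ are Euclidean-equivalent if for each hyperedge $h$ some Euclidean isometry $g_h$ of $\mathbb{R}^k$ satisfies $g_h(p(u))=q(u)$ for $u\in h$, and Euclidean-congruent if one isometry $g$ of $\mathbb{R}^k$ satisfies $g(p(u))=q(u)$ for all $u$. A framework is globally Euclideanly rigid in $\mathbb{R}^k$ if every Euclidean-equivalent framework in $\mathbb{R}^k$ is Euclidean-congruent to it, and locally Euclideanly rigid in $\mathbb{R}^k$ if this holds for all equivalent frameworks whose configurations lie in some neighborhood of $p$ in $(\mathbb{R}^k)^V$. Viewing $\mathbb{R}^d\subset\mathbb{R}^{d'}$ ($d'\ge d$) as the first $d$ coordinates, $(p,\Theta)$ is universally globally (resp. locally) Euclideanly rigid if it is globally (resp. locally) Euclideanly rigid in $\mathbb{R}^{d'}$ for every $d'\ge d$. *)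

From HB Require Import structures.
From mathcomp Require Import all_boot all_order all_algebra.
From mathcomp Require Import reals.
Set Implicit Arguments. Unset Strict Implicit. Unset Printing Implicit Defensive.
Import Order.TTheory GRing.Theory Num.Theory.
Local Open Scope ring_scope.

Section Defs.
Variable R : realType.

Definition sqdist (k : nat) (x y : 'rV[R]_k) : R :=
  \sum_(i < k) (x ord0 i - y ord0 i) ^+ 2.

Definition isometry (k : nat) (g : 'rV[R]_k -> 'rV[R]_k) : Prop :=
  forall x y, sqdist (g x) (g y) = sqdist x y.

Definition hypergraph (V : finType) := {set {set V}}.

Definition eucl_equivalent (V : finType) (k : nat) (Th : hypergraph V)
    (p q : V -> 'rV[R]_k) : Prop :=
  forall h, h \in Th -> exists g, isometry g /\ forall u, u \in h -> g (p u) = q u.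

Definition eucl_congruent (V : finType) (k : nat) (p q : V -> 'rV[R]_k) : Prop :=
  exists g, isometry g /\ forall u, g (p u) = q u.

Definition globally_rigid (V : finType) (k : nat) (Th : hypergraph V)
    (p : V -> 'rV[R]_k) : Prop :=
  forall q, eucl_equivalent Th p q -> eucl_congruent p q.

(* Neighbourhood of p in (R^k)^V: a product of Euclidean balls of radius eps. *)
Definition locally_rigid (V : finType) (k : nat) (Th : hypergraph V)
    (p : V -> 'rV[R]_k) : Prop :=
  exists eps : R, 0 < eps /\
    forall q, (forall v, sqdist (q v) (p v) < eps) ->
      eucl_equivalent Th p q -> eucl_congruent p q.

(* R^d inside R^d' as the first d coordinates (other coordinates 0). *)
Definition embed (d d' : nat) (x : 'rV[R]_d) : 'rV[R]_d' :=
  \row_(j < d') odflt 0 (omap (fun i : 'I_d => x ord0 i) (insub (val j))).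

Definition univ_globally_rigid (V : finType) (d : nat) (Th : hypergraph V)
    (p : V -> 'rV[R]_d) : Prop :=
  forall d', (d <= d')%N -> globally_rigid Th (fun v => embed d' (p v)).

Definition univ_locally_rigid (V : finType) (d : nat) (Th : hypergraph V)
    (p : V -> 'rV[R]_d) : Prop :=
  forall d', (d <= d')%N -> locally_rigid Th (fun v => embed d' (p v)).

End Defs.

From Pilot Require Import Defs.
From HB Require Import structures.
From mathcomp Require Import all_boot all_order all_algebra.
From mathcomp Require Import reals ring lra.
From mathcomp Require Import boolp.
Set Implicit Arguments. Unset Strict Implicit. Unset Printing Implicit Defensive.
Import Order.TTheory GRing.Theory Num.Theory.
Local Open Scope ring_scope.

(* Global rigidity trivially implies local rigidity.  Conversely, let q in
   R^d' be equivalent to p.  In R^(2d') the configuration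
   r_v = (c p_v, s q_v) with c^2 + s^2 = 1 is still equivalent to p (on each
   hyperedge its squared distances are c^2 D + s^2 D = D), and it tends to
   p as s -> 0.  Local rigidity in R^(2d') makes r congruent to p, so
   c^2 |p_u - p_v|^2 + s^2 |q_u - q_v|^2 = |p_u - p_v|^2 for all u, v; as
   s != 0, q has the same pairwise distances as p, hence is congruent to it. *)

Section Reflection.
Variables (R : realType) (k : nat).
Implicit Types x y z u v w : 'rV[R]_k.

Definition dot u v : R := \sum_(i < k) u ord0 i * v ord0 i.

Lemma dotC u v : dot u v = dot v u.
Proof. by apply: eq_bigr => i _; rewrite mulrC. Qed.

Lemma dotBl u v w : dot (u - v) w = dot u w - dot v w.
Proof.
by rewrite /dot -sumrB; apply: eq_bigr => i _; rewrite !mxE mulrBl.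
Qed.

Lemma dotBr u v w : dot w (u - v) = dot w u - dot w v.
Proof. by rewrite dotC dotBl !(dotC w). Qed.

Lemma dotZl c u w : dot (c *: u) w = c * dot u w.
Proof. by rewrite /dot mulr_sumr; apply: eq_bigr => i _; rewrite !mxE mulrA. Qed.

Lemma dotZr c u w : dot w (c *: u) = c * dot w u.
Proof. by rewrite dotC dotZl dotC. Qed.

Lemma dotBB u v : dot (u - v) (u - v) = dot u u - 2 * dot u v + dot v v.
Proof. by rewrite !dotBl !dotBr (dotC v u); ring. Qed.

Lemma sqdistE x y : sqdist x y = dot (x - y) (x - y).
Proof. by apply: eq_bigr => i _; rewrite !mxE expr2. Qed.

Lemma dot_eq0 u : dot u u = 0 -> u = 0.
Proof.
move=> /eqP; rewrite psumr_eq0 => [/allP uu0|i _]; last by rewrite -expr2 sqr_ge0.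
apply/rowP => i; rewrite mxE.
by move: (uu0 i (mem_index_enum _)) => /implyP /(_ isT); rewrite mulf_eq0 orbb => /eqP.
Qed.

(* The reflection in the perpendicular bisector hyperplane of [x] and [y]
   (the identity when [x = y]). *)
Definition bisector_refl x y z : 'rV[R]_k :=
  z - ((2 * dot z (y - x) - (dot y y - dot x x)) / dot (y - x) (y - x)) *: (y - x).

Lemma bisector_refl_isometry x y : Defs.isometry (bisector_refl x y).
Proof.
move=> z z'; rewrite !sqdistE /bisector_refl.
set w := y - x; set n := dot w w; set C := dot y y - dot x x.
set a := (2 * dot z w - C) / n; set a' := (2 * dot z' w - C) / n.
have -> : z - a *: w - (z' - a' *: w) = (z - z') - (a - a') *: w.
  by rewrite scalerBl !opprD !opprK addrACA.
have -> : a - a' = 2 * dot (z - z') w / n.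
  by rewrite /a /a' dotBl -mulrBl; congr (_ * _); ring.
rewrite [LHS]dotBB !dotZr !dotZl -/n.
have [->|n0] := eqVneq n 0; first by rewrite invr0 !(mulr0, mul0r) subr0 addr0.
by field.
Qed.

Lemma bisector_refl_fix x y z : sqdist z x = sqdist z y -> bisector_refl x y z = z.
Proof.
rewrite !sqdistE !dotBB /bisector_refl => zxy.
suff -> : 2 * dot z (y - x) - (dot y y - dot x x) = 0 by rewrite mul0r scale0r subr0.
rewrite dotBr; lra.
Qed.

Lemma bisector_refl_swap x y : bisector_refl x y x = y.
Proof.
rewrite /bisector_refl.
have -> : 2 * dot x (y - x) - (dot y y - dot x x) = - dot (y - x) (y - x).
  by rewrite dotBB dotBr (dotC y x); ring.
have [/dot_eq0/eqP|n0] := eqVneq (dot (y - x) (y - x)) 0.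
  by rewrite subr_eq0 => /eqP ->; rewrite subrr scaler0 subr0.
by rewrite mulNr divff // scaleN1r opprK addrC subrK.
Qed.

(* Induction on the list: compose with the reflection sending the current
   image of the new point to its target; it fixes the images of the earlier
   points, which are equidistant from both. *)
Lemma extend_isometry (I : eqType) (s : seq I) (X Y : I -> 'rV[R]_k) :
  {in s &, forall i j, sqdist (X i) (X j) = sqdist (Y i) (Y j)} ->
  exists g, Defs.isometry g /\ {in s, forall i, g (X i) = Y i}.
Proof.
elim: s => [|a s IH] XY; first by exists id.
have [|g [g_iso gXY]] := IH; first by move=> i j si sj; apply: XY; rewrite inE ?si ?sj orbT.
exists (bisector_refl (g (X a)) (Y a) \o g); split.
  by move=> z z' /=; rewrite bisector_refl_isometry g_iso.
move=> i; rewrite inE => /predU1P [->|si] /=; first by rewrite bisector_refl_swap.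
rewrite (gXY i si); apply: bisector_refl_fix; rewrite -{1}(gXY i si) g_iso.
by apply: XY; rewrite inE ?si ?eqxx ?orbT.
Qed.

End Reflection.

Section Frameworks.
Variables (R : realType) (V : finType) (k : nat).
Implicit Types p q : V -> 'rV[R]_k.

Lemma eucl_congruentP p q :
  eucl_congruent p q <-> forall u v, sqdist (p u) (p v) = sqdist (q u) (q v).
Proof.
split=> [[g [g_iso gpq]] u v|pq]; first by rewrite -!gpq g_iso.
have [|g [g_iso gpq]] := @extend_isometry R k V (enum V) p q; first by move=> u v _ _.
by exists g; split=> // u; rewrite gpq ?mem_enum.
Qed.

Lemma eucl_equivalentP (Th : hypergraph V) p q :
  eucl_equivalent Th p q <->
  forall h, h \in Th -> {in h &, forall u v, sqdist (p u) (p v) = sqdist (q u) (q v)}.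
Proof.
split=> [pq h hTh u v hu hv|pq h hTh].
  by have [g [g_iso gpq]] := pq h hTh; rewrite -!gpq // g_iso.
have [|g [g_iso gpq]] := @extend_isometry R k V (enum h) p q.
  by move=> u v; rewrite !mem_enum; apply: pq.
by exists g; split=> // u hu; rewrite gpq ?mem_enum.
Qed.

End Frameworks.

Section Rotation.
Variable R : realType.

Lemma sqdist_ge0 n (a b : 'rV[R]_n) : 0 <= sqdist a b.
Proof. by apply: sumr_ge0 => i _; rewrite sqr_ge0. Qed.

Lemma sqdist_row_mx m n (a a' : 'rV[R]_m) (b b' : 'rV[R]_n) :
  sqdist (row_mx a b) (row_mx a' b') = sqdist a a' + sqdist b b'.
Proof.
rewrite /sqdist big_split_ord /=.
by congr (_ + _); apply: eq_bigr => i _; rewrite ?row_mxEl ?row_mxEr.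
Qed.

Lemma sqdistxx n (x : 'rV[R]_n) : sqdist x x = 0.
Proof. by rewrite /sqdist big1 // => i _; rewrite subrr expr0n. Qed.

Lemma sqdistZ n (c : R) (a b : 'rV[R]_n) :
  sqdist (c *: a) (c *: b) = c ^+ 2 * sqdist a b.
Proof. by rewrite /sqdist mulr_sumr; apply: eq_bigr => i _; rewrite !mxE; ring. Qed.

Lemma sqdistZZ n (c c' : R) (a : 'rV[R]_n) :
  sqdist (c *: a) (c' *: a) = (c - c') ^+ 2 * sqdist a 0.
Proof. by rewrite /sqdist mulr_sumr; apply: eq_bigr => i _; rewrite !mxE; ring. Qed.

Definition pad n (x : 'rV[R]_n) : 'rV[R]_(n + n) := row_mx x 0.

Definition rotate (V : finType) n (c s : R) (P q : V -> 'rV[R]_n) v : 'rV[R]_(n + n) :=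
  row_mx (c *: P v) (s *: q v).

Variables (V : finType) (n : nat) (P q : V -> 'rV[R]_n) (c s : R).
Hypothesis cs1 : c ^+ 2 + s ^+ 2 = 1.

Lemma sqdist_rotate u v :
  sqdist (rotate c s P q u) (rotate c s P q v) =
  c ^+ 2 * sqdist (P u) (P v) + s ^+ 2 * sqdist (q u) (q v).
Proof. by rewrite sqdist_row_mx !sqdistZ. Qed.

Lemma sqdist_rotate_pad v :
  sqdist (rotate c s P q v) (pad (P v)) =
  (c - 1) ^+ 2 * sqdist (P v) 0 + s ^+ 2 * sqdist (q v) 0.
Proof.
rewrite sqdist_row_mx -{2}(scale1r (P v)) sqdistZZ.
by rewrite -[X in sqdist (s *: _) X](scaler0 _ s) sqdistZ.
Qed.

Lemma sqdist_pad u v : sqdist (pad (P u)) (pad (P v)) = sqdist (P u) (P v).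
Proof. by rewrite sqdist_row_mx sqdistxx addr0. Qed.

Lemma rotate_equivalent (Th : hypergraph V) : eucl_equivalent Th P q ->
  eucl_equivalent Th (fun v => pad (P v)) (rotate c s P q).
Proof.
move=> /eucl_equivalentP Pq; apply/eucl_equivalentP => h hTh u v hu hv.
by rewrite sqdist_pad sqdist_rotate -(Pq h) // -mulrDl cs1 mul1r.
Qed.

Lemma rotate_congruent : s != 0 ->
  eucl_congruent (fun v => pad (P v)) (rotate c s P q) -> eucl_congruent P q.
Proof.
move=> s0 /eucl_congruentP Pr; apply/eucl_congruentP => u v.
have := Pr u v; rewrite sqdist_pad sqdist_rotate => Puv.
have s2_neq0 : s ^+ 2 != 0 by rewrite sqrf_eq0.
rewrite (_ : c ^+ 2 = 1 - s ^+ 2) in Puv; last by rewrite -cs1 addrK.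
by apply: (mulfI s2_neq0); lra.
Qed.

End Rotation.

Lemma embed_double (R : realType) d n (x : 'rV[R]_d) : (d <= n)%N ->
  embed (n + n) x = pad (embed n x).
Proof.
move=> dn; apply/rowP => j; rewrite /pad !mxE.
case: splitP => [l jl|l jl]; have -> : val j = _ := jl; rewrite mxE //.
by rewrite insubN //= -leqNgt (leq_trans dn) ?leq_addr.
Qed.

Lemma small_rotation (R : realType) (e : R) : 0 < e ->
  exists c s : R, [/\ c ^+ 2 + s ^+ 2 = 1, s != 0, (c - 1) ^+ 2 < e & s ^+ 2 < e].
Proof.
move=> e0; set t := e / (e + 4).
have t0 : 0 < t by rewrite divr_gt0 // addr_gt0.
have t1 : t < 1 by rewrite ltr_pdivrMr ?addr_gt0 // mul1r ltrDl.
have te : 4 * t < e.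
  by rewrite /t mulrA ltr_pdivrMr ?addr_gt0 //; nra.
have t2e : 4 * t ^+ 2 < e by nra.
clearbody t; set D := 1 + t ^+ 2.
have D1 : 1 <= D by rewrite lerDl sqr_ge0.
have D0 : D != 0 by rewrite gt_eqF // (lt_le_trans ltr01).
(* the rational parametrisation of the unit circle by t *)
exists ((1 - t ^+ 2) / D), (2 * t / D); split.
- rewrite !expr_div_n -mulrDl.
  have -> : (1 - t ^+ 2) ^+ 2 + (2 * t) ^+ 2 = D ^+ 2 by rewrite /D; ring.
  by rewrite divff // sqrf_eq0.
- by rewrite !mulf_eq0 invr_eq0 (gt_eqF t0) (negPf D0) pnatr_eq0.
- have -> : (1 - t ^+ 2) / D - 1 = - (2 * t ^+ 2) / D by rewrite /D; field.
  apply: le_lt_trans t2e.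
  by rewrite expr_div_n ler_pdivrMr ?exprn_gt0 ?(lt_le_trans ltr01) // /D; nra.
- apply: le_lt_trans t2e.
  by rewrite expr_div_n ler_pdivrMr ?exprn_gt0 ?(lt_le_trans ltr01) // /D; nra.
Qed.

Lemma finite_upper_bound (R : realType) (V : finType) (f : V -> R) :
  exists M, 0 < M /\ forall v, f v < M.
Proof.
have S0 : 0 <= \sum_v `|f v| by apply: sumr_ge0.
exists (1 + \sum_v `|f v|); split=> [|v]; first by rewrite ltr_wpDr.
rewrite (bigD1 v) //=.
have : 0 <= \sum_(u | u != v) `|f u| by apply: sumr_ge0.
have := ler_norm (f v); lra.
Qed.

Theorem lemma2p11 (R : realType) (V : finType) (d : nat) (Th : hypergraph V)
    (p : V -> 'rV[R]_d) :
  univ_globally_rigid Th p <-> univ_locally_rigid Th p.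
Proof.
split=> [glob d' dd|loc d' dd q Pq].
  by exists 1; split=> [|q _]; [exact: ltr01 | exact: glob].
pose P v := embed d' (p v).
have [eps [eps0 locP]] := loc (d' + d')%N (leq_trans dd (leq_addr _ _)).
have [M [M0 PqM]] := finite_upper_bound (fun v => sqdist (P v) 0 + sqdist (q v) 0).
have [c [s [cs1 s0 c1e se]]] := small_rotation (divr_gt0 eps0 M0).
have Pe : (fun v => embed (d' + d') (p v)) = fun v => pad (P v).
  by apply: funext => v; rewrite embed_double.
rewrite Pe in locP; apply: (rotate_congruent cs1 s0).
apply: locP (rotate_equivalent cs1 Pq) => v.
rewrite embed_double // sqdist_rotate_pad.
have := PqM v; have := sqdist_ge0 (P v) 0; have := sqdist_ge0 (q v) 0.
have : eps = eps / M * M by rewrite divfK ?gt_eqF.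
nra.
Qed.
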